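(* (i) The commutator subgroup $H^\infty_+$ of $H^\infty$ is dense in $SO(4)$; (ii) $H^\infty$ is dense in $O(4)$; (iii) $\Sigma$ is dense in the unit sphere $\mathcal S$ of $\mathbb{R}^4$.
   Context: Let $\tau=(1+\sqrt5)/2$, $\tau'=(1-\sqrt5)/2$. Let $\Delta\subset\mathbb{R}^4$ be the set of 120 vectors consisting of: the 8 vectors obtained from $(\pm1,0,0,0)$ by permuting coordinates; the 16 vectors $\frac12(\pm1,\pm1,\pm1,\pm1)$; and the 96 vectors obtained from $\frac12(0,\pm1,\pm\tau',\pm\tau)$ (all sign choices) by even permutations of the coordinates. Let $\Delta'$ be the image of $\Delta$ under the Galois conjugation $\tau\leftrightarrow\tau'$ applied to each coordinate. For a unit vector $a$, $r_a(x)=x-2(x\cdot a)a$. Let $H_4$ (resp. $H_4'$) be the group generated by $r_a$, $a\in\Delta$ (resp. $a\in\Delta'$), and $H^\infty$ the subgroup of $O(4)$ generated by $H_4\cup H_4'$. Let $\Sigma=\{w(a): w\in H^\infty,\ a\in\Delta\cup\Delta'\}$. *)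

From Stdlib Require Import Reals Lra List.
Import ListNotations.
Open Scope R_scope.

Record V4 := mkV { c0 : R; c1 : R; c2 : R; c3 : R }.

Definition coord (x : V4) (i : nat) : R :=
  match i with 0%nat => c0 x | 1%nat => c1 x | 2%nat => c2 x | _ => c3 x end.

Definition vadd (x y : V4) : V4 := mkV (c0 x + c0 y) (c1 x + c1 y) (c2 x + c2 y) (c3 x + c3 y).
Definition vscal (k : R) (x : V4) : V4 := mkV (k * c0 x) (k * c1 x) (k * c2 x) (k * c3 x).
Definition vsub (x y : V4) : V4 := vadd x (vscal (-1) y).
Definition dot (x y : V4) : R := c0 x * c0 y + c1 x * c1 y + c2 x * c2 y + c3 x * c3 y.
Definition vnorm (x : V4) : R := sqrt (dot x x).

Definition e (j : nat) : V4 :=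
  match j with
  | 0%nat => mkV 1 0 0 0 | 1%nat => mkV 0 1 0 0
  | 2%nat => mkV 0 0 1 0 | _ => mkV 0 0 0 1 end.

Definition tau : R := (1 + sqrt 5) / 2.
Definition tau' : R := (1 - sqrt 5) / 2.

Definition permv (b : nat -> R) (p : nat * nat * nat * nat) : V4 :=
  let '(p0, p1, p2, p3) := p in mkV (b p0) (b p1) (b p2) (b p3).

Definition even_perms : list (nat * nat * nat * nat) :=
  [(0,1,2,3); (0,2,3,1); (0,3,1,2); (1,0,3,2); (1,2,0,3); (1,3,2,0);
   (2,0,1,3); (2,1,3,0); (2,3,0,1); (3,0,2,1); (3,1,0,2); (3,2,1,0)]%nat.

Definition sgn (b : bool) : R := if b then 1 else -1.

(* The root system Delta(t, t'); Delta = DeltaP tau tau', Delta' = DeltaP tau' tau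
   (Galois conjugation tau <-> tau' applied coordinatewise). *)
Definition DeltaP (t t' : R) (a : V4) : Prop :=
  (exists (j : nat) (s : bool), (j < 4)%nat /\ a = vscal (sgn s) (e j))
  \/
  (exists s0 s1 s2 s3 : bool,
      a = mkV (sgn s0 / 2) (sgn s1 / 2) (sgn s2 / 2) (sgn s3 / 2))
  \/
  (* 96 vectors: even permutations of 1/2(0,+-1,+-t',+-t) *)
  (exists (p : nat * nat * nat * nat) (s1 s2 s3 : bool),
      In p even_perms /\
      a = permv (fun i => match i with
                          | 0%nat => 0
                          | 1%nat => sgn s1 / 2
                          | 2%nat => sgn s2 * t' / 2
                          | _ => sgn s3 * t / 2 end) p).

Definition Delta : V4 -> Prop := DeltaP tau tau'.
Definition Delta' : V4 -> Prop := DeltaP tau' tau.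

Definition refl (a : V4) (x : V4) : V4 := vsub x (vscal (2 * dot x a) a).

Inductive gen_group (S : (V4 -> V4) -> Prop) : (V4 -> V4) -> Prop :=
  | gg_id : gen_group S (fun x => x)
  | gg_base : forall g, S g -> gen_group S g
  | gg_comp : forall g h, gen_group S g -> gen_group S h ->
                gen_group S (fun x => g (h x))
  | gg_inv : forall g h, gen_group S g ->
               (forall x, h (g x) = x) -> (forall x, g (h x) = x) ->
               gen_group S h.

Definition Hinf : (V4 -> V4) -> Prop :=
  gen_group (fun g => exists a, (Delta a \/ Delta' a) /\ g = refl a).

Definition Hinf_plus : (V4 -> V4) -> Prop :=
  gen_group (fun c => exists g h gi hi,
      Hinf g /\ Hinf h /\
      (forall x, gi (g x) = x) /\ (forall x, g (gi x) = x) /\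
      (forall x, hi (h x) = x) /\ (forall x, h (hi x) = x) /\
      c = (fun x => g (h (gi (hi x))))).

Definition Sigma (v : V4) : Prop :=
  exists w a, Hinf w /\ (Delta a \/ Delta' a) /\ v = w a.

(* O(4): maps R^4 -> R^4 preserving the inner product (these are exactly the
   orthogonal linear maps) *)
Definition O4 (f : V4 -> V4) : Prop := forall x y, dot (f x) (f y) = dot x y.

(* determinant of the matrix of f (entry (i,j) = i-th coordinate of f(e_j)) *)
Definition det3 (a11 a12 a13 a21 a22 a23 a31 a32 a33 : R) : R :=
  a11 * (a22 * a33 - a23 * a32) - a12 * (a21 * a33 - a23 * a31)
  + a13 * (a21 * a32 - a22 * a31).

Definition det4 (f : V4 -> V4) : R :=
  let m (i j : nat) := coord (f (e j)) i in
  m 0%nat 0%nat * det3 (m 1%nat 1%nat) (m 1%nat 2%nat) (m 1%nat 3%nat) (m 2%nat 1%nat) (m 2%nat 2%nat) (m 2%nat 3%nat) (m 3%nat 1%nat) (m 3%nat 2%nat) (m 3%nat 3%nat)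
  - m 0%nat 1%nat * det3 (m 1%nat 0%nat) (m 1%nat 2%nat) (m 1%nat 3%nat) (m 2%nat 0%nat) (m 2%nat 2%nat) (m 2%nat 3%nat) (m 3%nat 0%nat) (m 3%nat 2%nat) (m 3%nat 3%nat)
  + m 0%nat 2%nat * det3 (m 1%nat 0%nat) (m 1%nat 1%nat) (m 1%nat 3%nat) (m 2%nat 0%nat) (m 2%nat 1%nat) (m 2%nat 3%nat) (m 3%nat 0%nat) (m 3%nat 1%nat) (m 3%nat 3%nat)
  - m 0%nat 3%nat * det3 (m 1%nat 0%nat) (m 1%nat 1%nat) (m 1%nat 2%nat) (m 2%nat 0%nat) (m 2%nat 1%nat) (m 2%nat 2%nat) (m 3%nat 0%nat) (m 3%nat 1%nat) (m 3%nat 2%nat).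

Definition SO4 (f : V4 -> V4) : Prop := O4 f /\ det4 f = 1.

(* G is dense in the set X of linear maps (matrix-norm topology: columns close) *)
Definition dense_maps (G X : (V4 -> V4) -> Prop) : Prop :=
  forall f, X f -> forall eps, 0 < eps ->
    exists g, G g /\ forall j, (j < 4)%nat -> vnorm (vsub (g (e j)) (f (e j))) < eps.

Definition sphere (x : V4) : Prop := dot x x = 1.

Definition dense_in_sphere (A : V4 -> Prop) : Prop :=
  (forall v, A v -> sphere v) /\
  forall x, sphere x -> forall eps, 0 < eps ->
    exists v, A v /\ vnorm (vsub v x) < eps.

(* The reflections in the points of the closure K of Sigma (inside the sphere)
   again map K into itself. Two roots a in Delta and b in Delta' with
   a . b = -1/4 = cos theta0 generate a rotation by 2 theta0 of their plane; by
   the Chebyshev recurrence cos (n theta0) = odd / 2^(n+1), so theta0 / pi is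
   irrational and the orbit of a is dense in the unit circle of that plane.
   Moving this circle by elements of H^infty and reflecting in its points,
   every unit vector is brought in two steps into a fixed plane, whose circle
   lies in K: so K is the whole sphere. Finally every orthogonal map is a
   product of at most four reflections (Householder), whose mirrors can be
   approximated by points of Sigma, and a product of two reflections r_x r_y
   equals the commutator [r_x, r_z] for a suitable unit vector z. *)

From Stdlib Require Import Reals Lra Lia ZArith Nsatz List Classical.
Import ListNotations.
Open Scope R_scope.

Lemma V4_ext (x y : V4) :
  c0 x = c0 y -> c1 x = c1 y -> c2 x = c2 y -> c3 x = c3 y -> x = y.
Proof. destruct x, y; simpl; intros; subst; reflexivity. Qed.

Ltac vext := apply V4_ext; cbv beta iota delta [refl vsub vadd vscal dot e c0 c1 c2 c3].

Lemma dot_sym x y : dot x y = dot y x.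
Proof. unfold dot; ring. Qed.
Lemma dot_addl x y z : dot (vadd x y) z = dot x z + dot y z.
Proof. unfold dot, vadd; simpl; ring. Qed.
Lemma dot_addr x y z : dot z (vadd x y) = dot z x + dot z y.
Proof. unfold dot, vadd; simpl; ring. Qed.
Lemma dot_scall k x z : dot (vscal k x) z = k * dot x z.
Proof. unfold dot, vscal; simpl; ring. Qed.
Lemma dot_scalr k x z : dot z (vscal k x) = k * dot z x.
Proof. unfold dot, vscal; simpl; ring. Qed.
Lemma dot_subl x y z : dot (vsub x y) z = dot x z - dot y z.
Proof. unfold dot, vsub, vadd, vscal; simpl; ring. Qed.
Lemma dot_subr x y z : dot z (vsub x y) = dot z x - dot z y.
Proof. unfold dot, vsub, vadd, vscal; simpl; ring. Qed.

Ltac dot_expand :=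
  repeat progress rewrite ?dot_addl, ?dot_addr, ?dot_subl, ?dot_subr, ?dot_scall, ?dot_scalr.

Lemma dot_ge0 x : 0 <= dot x x.
Proof. unfold dot; nra. Qed.

Lemma dot_pos x y : x <> y -> 0 < dot (vsub x y) (vsub x y).
Proof.
  intros Nxy; destruct (dot_ge0 (vsub x y)) as [|E]; auto.
  exfalso; apply Nxy; destruct x as [x0 x1 x2 x3], y as [y0 y1 y2 y3].
  unfold dot, vsub, vadd, vscal in E; simpl in E.
  pose proof (pow2_ge_0 (x0 - y0)); pose proof (pow2_ge_0 (x1 - y1));
  pose proof (pow2_ge_0 (x2 - y2)); pose proof (pow2_ge_0 (x3 - y3)).
  vext; nra.
Qed.

Lemma vnorm_ge0 v : 0 <= vnorm v.
Proof. apply sqrt_pos. Qed.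
Lemma vnorm_sq v : vnorm v * vnorm v = dot v v.
Proof. apply sqrt_sqrt, dot_ge0. Qed.
Lemma vnorm_unit v : sphere v -> vnorm v = 1.
Proof. intros H; unfold vnorm; rewrite H; apply sqrt_1. Qed.

Lemma vnorm_scal k v : vnorm (vscal k v) = Rabs k * vnorm v.
Proof.
  apply Rsqr_inj; [apply vnorm_ge0 | apply Rmult_le_pos; [apply Rabs_pos | apply vnorm_ge0]|].
  unfold Rsqr; rewrite vnorm_sq, dot_scall, dot_scalr, <- (vnorm_sq v).
  replace (Rabs k * vnorm v * (Rabs k * vnorm v)) with (Rabs k * Rabs k * (vnorm v * vnorm v)) by ring.
  rewrite <- Rabs_mult, Rabs_right by nra; ring.
Qed.

Lemma vnorm_sub_diag x : vnorm (vsub x x) = 0.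
Proof.
  replace (vsub x x) with (vscal 0 x) by (vext; ring).
  rewrite vnorm_scal, Rabs_R0; ring.
Qed.

Lemma vnorm_sub_sym x y : vnorm (vsub x y) = vnorm (vsub y x).
Proof.
  replace (vsub y x) with (vscal (-1) (vsub x y)) by (vext; ring).
  rewrite vnorm_scal, Rabs_left by lra; ring.
Qed.

Lemma cauchy_schwarz u v : Rabs (dot u v) <= vnorm u * vnorm v.
Proof.
  assert (Lagrange : dot u u * dot v v - dot u v * dot u v =
    (c0 u * c1 v - c1 u * c0 v)^2 + (c0 u * c2 v - c2 u * c0 v)^2 + (c0 u * c3 v - c3 u * c0 v)^2
    + (c1 u * c2 v - c2 u * c1 v)^2 + (c1 u * c3 v - c3 u * c1 v)^2 + (c2 u * c3 v - c3 u * c2 v)^2)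
    by (unfold dot; ring).
  pose proof (vnorm_sq u); pose proof (vnorm_sq v); pose proof (vnorm_ge0 u); pose proof (vnorm_ge0 v).
  apply Rsqr_incr_0; [| apply Rabs_pos | apply Rmult_le_pos; auto].
  rewrite <- Rsqr_abs; unfold Rsqr.
  assert (0 <= dot u u * dot v v - dot u v * dot u v)
    by (rewrite Lagrange; repeat apply Rplus_le_le_0_compat; apply pow2_ge_0).
  nra.
Qed.

Lemma vnorm_triangle u v : vnorm (vadd u v) <= vnorm u + vnorm v.
Proof.
  pose proof (cauchy_schwarz u v); pose proof (Rle_abs (dot u v)).
  pose proof (vnorm_sq u); pose proof (vnorm_sq v); pose proof (vnorm_ge0 u); pose proof (vnorm_ge0 v).
  apply Rsqr_incr_0_var; [| lra]; unfold Rsqr.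
  rewrite vnorm_sq; dot_expand; rewrite (dot_sym v u); nra.
Qed.

Lemma vdist_triangle x y z : vnorm (vsub x z) <= vnorm (vsub x y) + vnorm (vsub y z).
Proof.
  replace (vsub x z) with (vadd (vsub x y) (vsub y z)) by (vext; ring).
  apply vnorm_triangle.
Qed.

Lemma refl_dot a x y : dot a a = 1 -> dot (refl a x) (refl a y) = dot x y.
Proof.
  destruct a, x, y; unfold refl, vsub, vadd, vscal, dot; simpl; intros; nsatz.
Qed.

Lemma refl_invol a x : dot a a = 1 -> refl a (refl a x) = x.
Proof. destruct a, x; unfold dot; simpl; intros; vext; nsatz. Qed.

Lemma refl_add a x y : refl a (vadd x y) = vadd (refl a x) (refl a y).
Proof. vext; ring. Qed.
Lemma refl_sub a x y : refl a (vsub x y) = vsub (refl a x) (refl a y).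
Proof. vext; ring. Qed.
Lemma refl_opp a x : refl (vscal (-1) a) x = refl a x.
Proof. vext; ring. Qed.

Lemma O4_refl a : dot a a = 1 -> O4 (refl a).
Proof. intros H x y; apply refl_dot, H. Qed.
Lemma O4_id : O4 (fun x => x).
Proof. intros x y; reflexivity. Qed.
Lemma O4_comp f g : O4 f -> O4 g -> O4 (fun x => f (g x)).
Proof. intros Hf Hg x y; rewrite Hf, Hg; reflexivity. Qed.
Lemma O4_inv g h : O4 g -> (forall x, g (h x) = x) -> O4 h.
Proof. intros Hg Hgh x y; rewrite <- Hg, !Hgh; reflexivity. Qed.

Lemma vnorm_O4 f v : O4 f -> vnorm (f v) = vnorm v.
Proof. intros H; unfold vnorm; rewrite H; reflexivity. Qed.
Lemma sphere_O4 f v : O4 f -> sphere v -> sphere (f v).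
Proof. intros H; unfold sphere; rewrite H; auto. Qed.

(* [f (x + y) - f x - f y] has norm 0. *)
Lemma O4_add f x y : O4 f -> f (vadd x y) = vadd (f x) (f y).
Proof.
  intros Hf.
  destruct (classic (f (vadd x y) = vadd (f x) (f y))) as [|N]; auto.
  exfalso; apply dot_pos in N; revert N.
  dot_expand; rewrite !Hf; dot_expand; rewrite (dot_sym y x); lra.
Qed.

Lemma O4_scal f k x : O4 f -> f (vscal k x) = vscal k (f x).
Proof.
  intros Hf.
  destruct (classic (f (vscal k x) = vscal k (f x))) as [|N]; auto.
  exfalso; apply dot_pos in N; revert N.
  dot_expand; rewrite !Hf; dot_expand; lra.
Qed.

Lemma O4_sub f x y : O4 f -> f (vsub x y) = vsub (f x) (f y).
Proof. intros Hf; unfold vsub; rewrite O4_add, O4_scal; auto. Qed.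

Lemma refl_conj w wi a x : O4 w -> (forall y, w (wi y) = y) ->
  refl (w a) x = w (refl a (wi x)).
Proof.
  intros Hw Hi; unfold refl; rewrite (O4_sub w), (O4_scal w), Hi by exact Hw.
  replace (dot x (w a)) with (dot (wi x) a) by (rewrite <- Hw, Hi; reflexivity).
  reflexivity.
Qed.

Definition normalize (v : V4) : V4 := vscal (/ vnorm v) v.

Lemma sphere_normalize p q : p <> q -> sphere (normalize (vsub p q)).
Proof.
  intros Npq; apply dot_pos in Npq; pose proof (vnorm_sq (vsub p q)).
  assert (0 < vnorm (vsub p q)) by (pose proof (vnorm_ge0 (vsub p q)); nra).
  unfold sphere, normalize; rewrite dot_scall, dot_scalr, <- H; field; lra.
Qed.

Lemma householder_fix p q w : dot w p = dot w q -> refl (normalize (vsub p q)) w = w.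
Proof.
  intros Hw; unfold refl, normalize; rewrite dot_scalr, dot_subr, Hw.
  vext; ring.
Qed.

Lemma householder_swap p q : dot p p = dot q q -> p <> q ->
  refl (normalize (vsub p q)) p = q.
Proof.
  intros Hpq Npq; apply dot_pos in Npq as Hd.
  pose proof (vnorm_sq (vsub p q)) as Hr.
  assert (0 < vnorm (vsub p q)) by (pose proof (vnorm_ge0 (vsub p q)); nra).
  assert (Hdd : dot (vsub p q) (vsub p q) = 2 * (dot p p - dot p q))
    by (dot_expand; rewrite (dot_sym q p); lra).
  unfold refl, normalize; set (r := vnorm (vsub p q)) in *.
  replace (2 * dot p (vscal (/ r) (vsub p q))) with r.
  - vext; field; lra.
  - apply Rmult_eq_reg_r with r; [|lra].
    rewrite dot_scalr, dot_subr, Hr, Hdd; field; lra.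
Qed.

Definition det4m (m : nat -> nat -> R) : R :=
  let minor (j0 j1 j2 : nat) :=
    det3 (m 1%nat j0) (m 1%nat j1) (m 1%nat j2) (m 2%nat j0) (m 2%nat j1) (m 2%nat j2)
         (m 3%nat j0) (m 3%nat j1) (m 3%nat j2) in
  m 0%nat 0%nat * minor 1%nat 2%nat 3%nat - m 0%nat 1%nat * minor 0%nat 2%nat 3%nat
  + m 0%nat 2%nat * minor 0%nat 1%nat 3%nat - m 0%nat 3%nat * minor 0%nat 1%nat 2%nat.

Definition matmul (a b : nat -> nat -> R) (i j : nat) : R :=
  a i 0%nat * b 0%nat j + a i 1%nat * b 1%nat j + a i 2%nat * b 2%nat j + a i 3%nat * b 3%nat j.

Definition mat (f : V4 -> V4) (i j : nat) : R := coord (f (e j)) i.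

Lemma det4m_mul a b : det4m (matmul a b) = det4m a * det4m b.
Proof. unfold det4m, matmul, det3; ring. Qed.

Lemma det4m_ext m m' : (forall i j, m i j = m' i j) -> det4m m = det4m m'.
Proof. intros H; unfold det4m; rewrite !H; reflexivity. Qed.

Lemma det4E f : det4 f = det4m (mat f).
Proof. reflexivity. Qed.

Lemma det4_basis f g : (forall j, (j < 4)%nat -> f (e j) = g (e j)) -> det4 f = det4 g.
Proof. intros H; unfold det4; rewrite !H by lia; reflexivity. Qed.

Lemma det4_id : det4 (fun x => x) = 1.
Proof. unfold det4, det3; simpl; ring. Qed.

Lemma det4_refl v : det4 (refl v) = 1 - 2 * dot v v.
Proof.
  destruct v as [v0 v1 v2 v3]; unfold det4, det3, coord.
  cbv beta iota delta [refl vsub vadd vscal dot e c0 c1 c2 c3]; ring.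
Qed.

Lemma coord_O4 g v i : O4 g -> coord (g v) i =
  c0 v * mat g i 0 + c1 v * mat g i 1 + c2 v * mat g i 2 + c3 v * mat g i 3.
Proof.
  intros Hg.
  replace v with (vadd (vadd (vadd (vscal (c0 v) (e 0)) (vscal (c1 v) (e 1)))
                    (vscal (c2 v) (e 2))) (vscal (c3 v) (e 3))) at 1 by (vext; ring).
  rewrite !(O4_add g), !(O4_scal g) by exact Hg.
  unfold mat; destruct i as [|[|[|i]]]; simpl; ring.
Qed.

Lemma det4_comp g h : O4 g -> O4 h -> det4 (fun x => g (h x)) = det4 g * det4 h.
Proof.
  intros Hg Hh; rewrite !det4E, <- det4m_mul; apply det4m_ext; intros i j.
  unfold mat at 1; rewrite coord_O4 by exact Hg.
  unfold matmul, mat; cbn [coord]; ring.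
Qed.

Lemma det4_inv g h : O4 g -> (forall x, g (h x) = x) -> det4 g * det4 h = 1.
Proof.
  intros Hg Hgh; rewrite <- det4_comp by eauto using O4_inv.
  rewrite (det4_basis _ (fun x => x)) by auto; apply det4_id.
Qed.

Definition is_root (a : V4) : Prop := Delta a \/ Delta' a.

Lemma sgn_sq s : sgn s * sgn s = 1.
Proof. destruct s; simpl; ring. Qed.

Lemma DeltaP_unit t t' a : t * t + t' * t' = 3 -> DeltaP t t' a -> dot a a = 1.
Proof.
  intros Ht [[j [s [Hj ->]]] | [[s0 [s1 [s2 [s3 ->]]]] | [p [s1 [s2 [s3 [Hp ->]]]]]]].
  - pose proof (sgn_sq s).
    destruct j as [|[|[|[|j]]]]; try lia; unfold dot, vscal, e; simpl; nra.
  - pose proof (sgn_sq s0); pose proof (sgn_sq s1); pose proof (sgn_sq s2); pose proof (sgn_sq s3).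
    unfold dot; simpl; nra.
  - pose proof (sgn_sq s1); pose proof (sgn_sq s2); pose proof (sgn_sq s3).
    simpl in Hp; repeat (destruct Hp as [<-|Hp]; [unfold dot, permv; simpl; nra|]); contradiction.
Qed.

Lemma sqrt5_sq : sqrt 5 * sqrt 5 = 5.
Proof. apply sqrt_sqrt; lra. Qed.
Lemma tau_sq : tau * tau = tau + 1.
Proof. unfold tau; pose proof sqrt5_sq; nra. Qed.
Lemma tau'E : tau' = 1 - tau.
Proof. unfold tau, tau'; field. Qed.
Lemma tau_sq_sum : tau * tau + tau' * tau' = 3.
Proof. rewrite tau'E; pose proof tau_sq; nra. Qed.

Lemma root_unit a : is_root a -> dot a a = 1.
Proof.
  intros [H|H]; eapply DeltaP_unit; eauto; [|rewrite Rplus_comm]; apply tau_sq_sum.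
Qed.

Lemma Hinf_refl a : is_root a -> Hinf (refl a).
Proof. intros Ha; apply gg_base; eauto. Qed.

Lemma Hinf_comp g h : Hinf g -> Hinf h -> Hinf (fun x => g (h x)).
Proof. apply gg_comp. Qed.

Lemma Hinf_O4 g : Hinf g -> O4 g.
Proof.
  induction 1 as [| g [a [Ha ->]] | | g h _ IH Hhg Hgh].
  - apply O4_id.
  - apply O4_refl, root_unit, Ha.
  - apply O4_comp; auto.
  - eapply O4_inv; eauto.
Qed.

Lemma Hinf_inv g : Hinf g ->
  exists h, Hinf h /\ (forall x, h (g x) = x) /\ (forall x, g (h x) = x).
Proof.
  induction 1 as [| g [a [Ha ->]] | g h _ [gi [Hgi [A1 A2]]] _ [hi [Hhi [B1 B2]]] | g h Hg _ Hhg Hgh].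
  - exists (fun x => x); repeat split; apply gg_id.
  - exists (refl a); repeat split; try apply Hinf_refl; auto;
      intros; apply refl_invol, root_unit, Ha.
  - exists (fun x => hi (gi x)); repeat split; [apply gg_comp; auto | |];
      intros; rewrite ?A1, ?B1, ?B2, ?A2; reflexivity.
  - exists g; repeat split; auto.
Qed.

Lemma Hinf_ext g h : Hinf g -> (forall x, g x = h x) -> Hinf h.
Proof.
  intros Hg E; destruct (Hinf_inv g Hg) as [gi [Hgi [A1 A2]]].
  apply (gg_inv _ gi); auto; intros x; rewrite <- E; auto.
Qed.

Lemma Hinf_plus_SO4 g : Hinf_plus g -> SO4 g.
Proof.
  induction 1 as [| c [g [h [gi [hi [Hg [Hh [A1 [A2 [B1 [B2 ->]]]]]]]]]]
                  | g h _ [Og Dg] _ [Oh Dh] | g h _ [Og Dg] Hhg Hgh].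
  - split; [apply O4_id | apply det4_id].
  - apply Hinf_O4 in Hg, Hh.
    assert (Ogi : O4 gi) by eauto using O4_inv.
    assert (Ohi : O4 hi) by eauto using O4_inv.
    pose proof (det4_inv g gi Hg A2); pose proof (det4_inv h hi Hh B2).
    assert (O1 : O4 (fun x => gi (hi x))) by now apply O4_comp.
    assert (O2 : O4 (fun x => h (gi (hi x)))) by now apply (O4_comp h).
    split; [now apply (O4_comp g)|].
    rewrite (det4_comp g), (det4_comp h), (det4_comp gi) by assumption; nra.
  - split; [apply O4_comp | rewrite det4_comp, Dg, Dh]; auto; ring.
  - pose proof (det4_inv g h Og Hgh); split; [eapply O4_inv|]; eauto; nra.
Qed.

Lemma refl_mirror_lipschitz s k x : sphere s -> sphere k -> sphere x ->
  vnorm (vsub (refl s x) (refl k x)) <= 4 * vnorm (vsub s k).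
Proof.
  intros Hs Hk Hx.
  replace (vsub (refl s x) (refl k x)) with
    (vscal 2 (vadd (vscal (dot x k) (vsub k s)) (vscal (dot x (vsub k s)) s))) by (vext; ring).
  pose proof (vnorm_triangle (vscal (dot x k) (vsub k s)) (vscal (dot x (vsub k s)) s)).
  pose proof (cauchy_schwarz x k); pose proof (cauchy_schwarz x (vsub k s)).
  rewrite vnorm_scal, Rabs_right, !vnorm_scal in * by lra.
  rewrite (vnorm_unit x), (vnorm_unit k), (vnorm_unit s), (vnorm_sub_sym k s) in * by auto.
  pose proof (vnorm_ge0 (vsub s k)); pose proof (Rabs_pos (dot x k));
    pose proof (Rabs_pos (dot x (vsub k s))).
  nra.
Qed.

Lemma refl_approx s k t x : sphere s -> sphere k -> sphere x ->
  vnorm (vsub (refl s t) (refl k x)) <= vnorm (vsub t x) + 4 * vnorm (vsub s k).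
Proof.
  intros Hs Hk Hx; eapply Rle_trans; [apply (vdist_triangle _ (refl s x))|].
  rewrite <- refl_sub, vnorm_O4 by now apply O4_refl.
  pose proof (refl_mirror_lipschitz s k x Hs Hk Hx); lra.
Qed.

Lemma Sigma_sphere s : Sigma s -> sphere s.
Proof. intros [w [a [Hw [Ha ->]]]]; apply sphere_O4, root_unit; auto using Hinf_O4. Qed.

Lemma Sigma_root a : is_root a -> Sigma a.
Proof. intros Ha; exists (fun x => x), a; repeat split; [apply gg_id | exact Ha]. Qed.

Lemma Sigma_Hinf w s : Hinf w -> Sigma s -> Sigma (w s).
Proof.
  intros Hw [w' [a [Hw' [Ha ->]]]]; exists (fun x => w (w' x)), a.
  split; [apply Hinf_comp|]; auto.
Qed.

Lemma Hinf_refl_Sigma s : Sigma s -> Hinf (refl s).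
Proof.
  intros [w [a [Hw [Ha ->]]]]; destruct (Hinf_inv w Hw) as [wi [Hwi [_ A2]]].
  apply (Hinf_ext (fun x => w (refl a (wi x)))).
  - apply Hinf_comp; [|apply Hinf_comp]; auto using Hinf_refl.
  - intros x; symmetry; apply refl_conj; auto using Hinf_O4.
Qed.

Definition Sigma_cl (x : V4) : Prop :=
  sphere x /\ forall eps, 0 < eps -> exists s, Sigma s /\ vnorm (vsub s x) < eps.

Lemma Sigma_cl_refl k x : Sigma_cl k -> Sigma_cl x -> Sigma_cl (refl k x).
Proof.
  intros [Hk Ak] [Hx Ax]; split; [apply sphere_O4; [apply O4_refl|]; auto|].
  intros eps He.
  destruct (Ak (eps / 5)) as [s [Hs Ds]]; [lra|].
  destruct (Ax (eps / 5)) as [t [Ht Dt]]; [lra|].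
  exists (refl s t); split.
  - apply Sigma_Hinf; auto using Hinf_refl_Sigma.
  - pose proof (refl_approx s k t x (Sigma_sphere s Hs) Hk Hx); lra.
Qed.

Lemma Sigma_cl_Hinf w x : Hinf w -> Sigma_cl x -> Sigma_cl (w x).
Proof.
  intros Hw [Hx Ax]; apply Hinf_O4 in Hw as Ow; split; [now apply sphere_O4|].
  intros eps He; destruct (Ax eps He) as [s [Hs Ds]].
  exists (w s); split; [now apply Sigma_Hinf|].
  rewrite <- O4_sub, vnorm_O4; auto.
Qed.

(** * Dense orbits of irrational rotations *)

Lemma pigeonhole N (f : nat -> nat) : (forall k, (k <= N)%nat -> (f k < N)%nat) ->
  exists i j, (i < j <= N)%nat /\ f i = f j.
Proof.
  revert f; induction N as [|N IH]; intros f Hf.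
  - specialize (Hf 0%nat (le_n 0)); lia.
  - destruct (classic (exists i, (i <= N)%nat /\ f i = f (S N))) as [[i [Hi E]]|Hn].
    + exists i, (S N); split; [lia|auto].
    + assert (Hne : forall k, (k <= N)%nat -> f k <> f (S N)) by firstorder.
      (* squeeze the value [f (S N)] out of the range *)
      set (g k := if Nat.ltb (f k) (f (S N)) then f k else Nat.pred (f k)).
      destruct (IH g) as [i [j [Hij Eg]]].
      * intros k Hk; specialize (Hne k Hk); pose proof (Hf k ltac:(lia)); pose proof (Hf (S N) (le_n _)).
        unfold g; destruct (Nat.ltb_spec (f k) (f (S N))); lia.
      * exists i, j; split; [lia|].
        pose proof (Hne i ltac:(lia)); pose proof (Hne j ltac:(lia)); unfold g in Eg.
        destruct (Nat.ltb_spec (f i) (f (S N))), (Nat.ltb_spec (f j) (f (S N))); lia.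
Qed.

Lemma cos_period_Z x z : cos (x + 2 * IZR z * PI) = cos x.
Proof.
  destruct (Z_le_gt_dec 0 z) as [Hz|Hz].
  - rewrite <- (Z2Nat.id z Hz), <- INR_IZR_INZ; apply cos_period.
  - rewrite <- (cos_period _ (Z.to_nat (- z))), INR_IZR_INZ, Z2Nat.id, opp_IZR by lia.
    f_equal; ring.
Qed.

Lemma sin_period_Z x z : sin (x + 2 * IZR z * PI) = sin x.
Proof.
  destruct (Z_le_gt_dec 0 z) as [Hz|Hz].
  - rewrite <- (Z2Nat.id z Hz), <- INR_IZR_INZ; apply sin_period.
  - rewrite <- (sin_period _ (Z.to_nat (- z))), INR_IZR_INZ, Z2Nat.id, opp_IZR by lia.
    f_equal; ring.
Qed.

Lemma Rabs_sin_le x : Rabs (sin x) <= Rabs x.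
Proof.
  assert (Pos : forall x, 0 < x -> Rabs (sin x) <= x).
  { intros y Hy; destruct (Rle_lt_dec 1 y).
    - pose proof (SIN_bound y); apply Rabs_le; lra.
    - pose proof (sin_lt_x y Hy); assert (0 < sin y) by (apply sin_gt_0; pose proof PI2_1; lra).
      rewrite Rabs_right; lra. }
  destruct (Rtotal_order x 0) as [H|[->|H]].
  - rewrite <- (Rabs_Ropp x), <- (Rabs_Ropp (sin x)), <- sin_neg, (Rabs_right (- x)) by lra.
    apply Pos; lra.
  - rewrite sin_0, Rabs_R0; lra.
  - rewrite (Rabs_right x) by lra; apply Pos, H.
Qed.

Lemma Rabs_half x : Rabs (x / 2) = Rabs x / 2.
Proof. unfold Rdiv; rewrite Rabs_mult, (Rabs_right (/ 2)) by lra; reflexivity. Qed.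

Lemma cos_lipschitz a b : Rabs (cos a - cos b) <= Rabs (a - b).
Proof.
  rewrite form2, !Rabs_mult, (Rabs_left (-2)) by lra.
  pose proof (Rabs_sin_le ((a - b) / 2)); rewrite Rabs_half in H.
  pose proof (SIN_bound ((a + b) / 2)).
  assert (Rabs (sin ((a + b) / 2)) <= 1) by (apply Rabs_le; lra).
  pose proof (Rabs_pos (sin ((a - b) / 2))); pose proof (Rabs_pos (sin ((a + b) / 2))); nra.
Qed.

Lemma sin_lipschitz a b : Rabs (sin a - sin b) <= Rabs (a - b).
Proof.
  rewrite form4, !Rabs_mult, (Rabs_right 2) by lra.
  pose proof (Rabs_sin_le ((a - b) / 2)); rewrite Rabs_half in H.
  pose proof (COS_bound ((a + b) / 2)).
  assert (Rabs (cos ((a + b) / 2)) <= 1) by (apply Rabs_le; lra).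
  pose proof (Rabs_pos (sin ((a - b) / 2))); pose proof (Rabs_pos (cos ((a + b) / 2))); nra.
Qed.

Lemma cos_sin_close_mod_2PI a b z eps : Rabs (a - b - 2 * IZR z * PI) < eps ->
  Rabs (cos a - cos b) < eps /\ Rabs (sin a - sin b) < eps.
Proof.
  intros H.
  replace a with ((a - 2 * IZR z * PI) + 2 * IZR z * PI) by ring.
  rewrite cos_period_Z, sin_period_Z.
  split; eapply Rle_lt_trans; [apply cos_lipschitz| |apply sin_lipschitz|];
    replace (a - 2 * IZR z * PI - b) with (a - b - 2 * IZR z * PI) by ring; exact H.
Qed.

Lemma INR_Z2Nat z : (0 <= z)%Z -> INR (Z.to_nat z) = IZR z.
Proof. intros Hz; rewrite INR_IZR_INZ, Z2Nat.id; auto. Qed.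

Lemma Int_part_nonneg x : 0 <= x -> (0 <= Int_part x)%Z.
Proof.
  intros Hx; pose proof (base_Int_part x).
  assert (L : IZR (-1) < IZR (Int_part x)) by (simpl; lra); apply lt_IZR in L; lia.
Qed.

(* Dirichlet: by pigeonhole, two of the points [k phi / 2 PI] ([k <= N]) have
   fractional parts in the same interval of length [1 / N]. *)
Lemma small_multiple_mod_2PI phi eps : 0 < eps ->
  exists (m : nat) (z : Z), (0 < m)%nat /\ Rabs (INR m * phi - 2 * IZR z * PI) < eps.
Proof.
  intros He; pose proof PI_RGT_0.
  destruct (archimed (2 * PI / eps)) as [HN _].
  assert (Hup : (0 <= up (2 * PI / eps))%Z)
    by (apply le_IZR; assert (0 < 2 * PI / eps) by (apply Rdiv_lt_0_compat; lra); lra).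
  set (N := Z.to_nat (up (2 * PI / eps))).
  assert (HNe : 2 * PI < eps * INR N).
  { unfold N; rewrite INR_Z2Nat by exact Hup.
    apply (Rmult_lt_compat_l eps) in HN; [|exact He].
    replace (eps * (2 * PI / eps)) with (2 * PI) in HN by (field; lra); exact HN. }
  assert (HN0 : 0 < INR N) by nra.
  set (x k := INR k * phi / (2 * PI)).
  set (box k := Z.to_nat (Int_part (INR N * frac_part (x k)))).
  assert (Hbox : forall k, 0 <= INR N * frac_part (x k) < INR N)
      by (intros k; pose proof (base_fp (x k)); split; nra).
  destruct (pigeonhole N box) as [i [j [Hij Eb]]].
  { intros k _; destruct (Hbox k) as [B0 B1]; pose proof (base_Int_part (INR N * frac_part (x k))).
    unfold box; apply INR_lt; rewrite INR_Z2Nat by (apply Int_part_nonneg; lra); lra. }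
  exists (j - i)%nat, (Int_part (x j) - Int_part (x i))%Z; split; [lia|].
  apply Z2Nat.inj in Eb; try apply Int_part_nonneg, Hbox.
  pose proof (base_Int_part (INR N * frac_part (x i)));
    pose proof (base_Int_part (INR N * frac_part (x j))).
  rewrite Eb in *.
  replace (INR (j - i) * phi - 2 * IZR (Int_part (x j) - Int_part (x i)) * PI)
    with (2 * PI * (frac_part (x j) - frac_part (x i)))
    by (rewrite minus_INR, minus_IZR by lia; unfold frac_part, x; field; lra).
  rewrite Rabs_mult, Rabs_right by lra.
  apply Rmult_lt_reg_r with (INR N); [lra|].
  assert (Rabs (frac_part (x j) - frac_part (x i)) * INR N < 1)
    by (rewrite <- (Rabs_right (INR N)), <- Rabs_mult by lra; apply Rabs_def1; lra).
  nra.
Qed.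

Lemma nat_multiple_close delta y : delta <> 0 -> 0 <= y / delta ->
  exists t : nat, Rabs (INR t * delta - y) < Rabs delta.
Proof.
  intros Hd Hy; exists (Z.to_nat (Int_part (y / delta))).
  rewrite INR_Z2Nat by now apply Int_part_nonneg.
  pose proof (base_Int_part (y / delta)).
  replace (IZR (Int_part (y / delta)) * delta - y)
    with ((IZR (Int_part (y / delta)) - y / delta) * delta)
    by (field; exact Hd).
  rewrite Rabs_mult; pose proof (Rabs_pos_lt delta Hd).
  assert (Rabs (IZR (Int_part (y / delta)) - y / delta) < 1) by (apply Rabs_def1; lra).
  nra.
Qed.

Lemma multiples_approx delta psi eps : delta <> 0 -> Rabs delta < eps ->
  exists (t : nat) (z : Z), Rabs (INR t * delta - psi - 2 * IZR z * PI) < eps.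
Proof.
  intros Hd He; pose proof PI_RGT_0.
  set (q := psi / (2 * PI)); set (I := Int_part q).
  assert (Hq : psi = 2 * PI * q) by (unfold q; field; lra).
  pose proof (base_Int_part q) as [B0 B1]; fold I in B0, B1.
  assert (Lo : 0 <= psi - 2 * IZR I * PI) by nra.
  assert (Hi : psi - 2 * IZR I * PI - 2 * PI < 0) by nra.
  assert (Rep : exists z, 0 <= (psi + 2 * IZR z * PI) / delta).
  { destruct (Rlt_le_dec 0 delta).
    - exists (- I)%Z; rewrite opp_IZR; apply Rmult_le_pos; [lra|left; apply Rinv_0_lt_compat; lra].
    - exists (- I - 1)%Z; rewrite minus_IZR, opp_IZR.
      replace ((psi + 2 * (- IZR I - 1) * PI) / delta)
        with ((psi - 2 * IZR I * PI - 2 * PI) * / delta) by (field; exact Hd).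
      assert (/ delta < 0) by (apply Rinv_lt_0_compat; lra); nra. }
  destruct Rep as [z Hz]; destruct (nat_multiple_close delta _ Hd Hz) as [t Ht].
  exists t, z.
  replace (INR t * delta - psi - 2 * IZR z * PI) with (INR t * delta - (psi + 2 * IZR z * PI)) by ring.
  lra.
Qed.

Lemma kronecker phi : (forall m, (0 < m)%nat -> cos (INR m * phi) <> 1) ->
  forall psi eps, 0 < eps -> exists k : nat,
    Rabs (cos (INR k * phi) - cos psi) < eps /\ Rabs (sin (INR k * phi) - sin psi) < eps.
Proof.
  intros Hirr psi eps He.
  destruct (small_multiple_mod_2PI phi eps He) as [m [w [Hm Hw]]].
  set (delta := INR m * phi - 2 * IZR w * PI) in Hw.
  assert (Hd : delta <> 0).
  { intros D; apply (Hirr m Hm).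
    replace (INR m * phi) with (0 + 2 * IZR w * PI) by (unfold delta in D; lra).
    rewrite cos_period_Z; apply cos_0. }
  destruct (multiples_approx delta psi eps Hd Hw) as [t [z Ht]].
  exists (t * m)%nat; apply cos_sin_close_mod_2PI with (z + Z.of_nat t * w)%Z.
  replace (INR (t * m) * phi - psi - 2 * IZR (z + Z.of_nat t * w) * PI)
    with (INR t * delta - psi - 2 * IZR z * PI); [exact Ht|].
  rewrite mult_INR, plus_IZR, mult_IZR, <- INR_IZR_INZ; unfold delta; ring.
Qed.

(** * Rotations generated by two reflections *)

Definition circle_in_cl (b1 b2 : V4) : Prop :=
  forall al be, sphere (vadd (vscal al b1) (vscal be b2)) ->
    Sigma_cl (vadd (vscal al b1) (vscal be b2)).

Lemma circle_in_cl_basis b1 b2 c1 c2 p q r s :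
  c1 = vadd (vscal p b1) (vscal q b2) -> c2 = vadd (vscal r b1) (vscal s b2) ->
  circle_in_cl b1 b2 -> circle_in_cl c1 c2.
Proof.
  intros -> -> H al be.
  replace (vadd (vscal al (vadd (vscal p b1) (vscal q b2))) (vscal be (vadd (vscal r b1) (vscal s b2))))
    with (vadd (vscal (al * p + be * r) b1) (vscal (al * q + be * s) b2)) by (vext; ring).
  apply H.
Qed.

Lemma circle_in_cl_Hinf w b1 b2 : Hinf w -> circle_in_cl b1 b2 -> circle_in_cl (w b1) (w b2).
Proof.
  intros Hw H al be; apply Hinf_O4 in Hw as Ow.
  rewrite <- (O4_scal w), <- (O4_scal w), <- (O4_add w) by exact Ow.
  intros Hs; apply Sigma_cl_Hinf, H; [exact Hw|].
  unfold sphere in *; rewrite Ow in Hs; exact Hs.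
Qed.

Lemma unit_circle_angle p q : p * p + q * q = 1 -> exists psi, cos psi = p /\ sin psi = - q.
Proof.
  intros H; assert (Hp : -1 <= p <= 1) by (split; nra).
  assert (Hsq : sqrt (1 - p²) = Rabs q)
    by (replace (1 - p²) with (q * q) by (unfold Rsqr; lra); apply sqrt_Rsqr_abs).
  destruct (Rle_dec q 0) as [Hq|Hq].
  - exists (acos p); rewrite cos_acos, sin_acos, Hsq, Rabs_left1 by lra; split; lra.
  - exists (- acos p); rewrite cos_neg, sin_neg, cos_acos, sin_acos, Hsq, Rabs_right by lra; split; lra.
Qed.

Lemma Hinf_iter f k : Hinf f -> Hinf (Nat.iter k f).
Proof. intros Hf; induction k as [|k IH]; [apply gg_id | apply (Hinf_comp f (Nat.iter k f)); auto]. Qed.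

Section TwoReflections.

Variables (a b : V4) (theta : R).
Hypothesis a_unit : dot a a = 1.
Hypothesis b_unit : dot b b = 1.
Hypothesis ab_cos : dot a b = cos theta.
Hypothesis sin_nz : sin theta <> 0.

Lemma sin_sq : sin theta ^ 2 = 1 - cos theta ^ 2.
Proof. pose proof (sin2_cos2 theta); unfold Rsqr in *; simpl; lra. Qed.

Definition perp : V4 := vscal (/ sin theta) (vsub b (vscal (cos theta) a)).

Definition rot (x : V4) : V4 := refl a (refl b x).

Lemma perp_a : dot perp a = 0.
Proof. unfold perp; dot_expand; rewrite (dot_sym b a), ab_cos, a_unit; ring. Qed.

Lemma perp_unit : dot perp perp = 1.
Proof.
  unfold perp; dot_expand; rewrite (dot_sym b a), ab_cos, a_unit, b_unit.
  field_simplify_eq; [rewrite sin_sq; ring | exact sin_nz].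
Qed.

Lemma rot_a : rot a = vsub (vscal (cos (2 * theta)) a) (vscal (sin (2 * theta)) perp).
Proof.
  unfold rot, refl, perp; dot_expand; rewrite (dot_sym b a), ab_cos, a_unit, cos_2a_cos, sin_2a.
  vext; field_simplify_eq; auto; rewrite ?sin_sq; ring.
Qed.

Lemma rot_perp : rot perp = vadd (vscal (sin (2 * theta)) a) (vscal (cos (2 * theta)) perp).
Proof.
  unfold rot, refl, perp; dot_expand; rewrite (dot_sym b a), ab_cos, a_unit, b_unit, cos_2a_cos, sin_2a.
  vext; field_simplify_eq; auto; rewrite ?sin_sq; ring.
Qed.

Lemma O4_rot : O4 rot.
Proof. apply (O4_comp (refl a) (refl b)); apply O4_refl; auto. Qed.

Lemma rot_iter k : Nat.iter k rot a =
  vsub (vscal (cos (INR k * (2 * theta))) a) (vscal (sin (INR k * (2 * theta))) perp).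
Proof.
  induction k as [|k IH].
  - simpl; rewrite Rmult_0_l, cos_0, sin_0; vext; ring.
  - rewrite S_INR; simpl Nat.iter; rewrite IH, (O4_sub rot), !(O4_scal rot), rot_a, rot_perp
      by apply O4_rot.
    replace ((INR k + 1) * (2 * theta)) with (INR k * (2 * theta) + 2 * theta) by ring.
    rewrite cos_plus, sin_plus; vext; ring.
Qed.

(* The orbit of [a] under [rot] is dense on the circle through [a] and [b]. *)
Lemma circle_in_cl_rot : is_root a -> is_root b ->
  (forall m, (0 < m)%nat -> cos (INR m * (2 * theta)) <> 1) -> circle_in_cl a perp.
Proof.
  intros Ha Hb Hirr p q Hs; split; [exact Hs|].
  assert (Hpq : p * p + q * q = 1).
  { revert Hs; unfold sphere; dot_expand; rewrite a_unit, perp_unit, perp_a, dot_sym, perp_a; lra. }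
  intros eps He; destruct (unit_circle_angle p q Hpq) as [psi [Hc Hsn]].
  destruct (kronecker (2 * theta) Hirr psi (eps / 2)) as [k [Kc Ks]]; [lra|].
  exists (Nat.iter k rot a); split.
  - apply Sigma_Hinf; [|now apply Sigma_root].
    apply Hinf_iter, (Hinf_comp (refl a) (refl b)); apply Hinf_refl; assumption.
  - rewrite rot_iter.
    replace (vsub (vsub (vscal (cos (INR k * (2 * theta))) a) (vscal (sin (INR k * (2 * theta))) perp))
               (vadd (vscal p a) (vscal q perp)))
      with (vadd (vscal (cos (INR k * (2 * theta)) - cos psi) a)
                 (vscal (- (sin (INR k * (2 * theta)) - sin psi)) perp))
      by (rewrite Hc, Hsn; vext; ring).
    eapply Rle_lt_trans; [apply vnorm_triangle|].
    rewrite !vnorm_scal, (vnorm_unit a), (vnorm_unit perp), Rabs_Ropp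
      by (apply perp_unit || apply a_unit).
    lra.
Qed.

End TwoReflections.

Definition theta0 : R := acos (-1/4).

Lemma cos_theta0 : cos theta0 = -1/4.
Proof. apply cos_acos; lra. Qed.

Lemma sin_theta0_pos : 0 < sin theta0.
Proof. unfold theta0; rewrite sin_acos by lra; apply sqrt_lt_R0; unfold Rsqr; lra. Qed.

(* Numerators of [cos (n theta0) = cheb_num n / 2^(n+1)], from the Chebyshev recurrence
   [cos ((n+2) t) = 2 cos t cos ((n+1) t) - cos (n t)]. *)
Fixpoint cheb_num (n : nat) : Z :=
  match n with
  | O => 2%Z
  | S O => (-1)%Z
  | S ((S m) as k) => (- cheb_num k - 4 * cheb_num m)%Z
  end.

Lemma cos_mul_theta0 n :
  cos (INR n * theta0) = IZR (cheb_num n) / 2 ^ S n /\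
  cos (INR (S n) * theta0) = IZR (cheb_num (S n)) / 2 ^ S (S n).
Proof.
  induction n as [|n [IH1 IH2]].
  - simpl; rewrite Rmult_0_l, cos_0, Rmult_1_l, cos_theta0; split; field.
  - split; [exact IH2|].
    replace (INR (S (S n)) * theta0) with (INR (S n) * theta0 + theta0) by (rewrite !S_INR; ring).
    replace (cos (INR (S n) * theta0 + theta0))
      with (2 * cos (INR (S n) * theta0) * cos theta0 - cos (INR n * theta0)).
    2: { replace (INR n * theta0) with (INR (S n) * theta0 - theta0) by (rewrite S_INR; ring).
         rewrite cos_plus, cos_minus; ring. }
    rewrite IH1, IH2, cos_theta0.
    change (cheb_num (S (S n))) with (- cheb_num (S n) - 4 * cheb_num n)%Z.
    rewrite minus_IZR, opp_IZR, mult_IZR; simpl; field; apply pow_nonzero; lra.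
Qed.

Lemma cheb_num_odd n : exists k, cheb_num (S n) = (2 * k + 1)%Z.
Proof.
  induction n as [|n [k IH]]; [now exists (-1)%Z|].
  exists (- k - 1 - 2 * cheb_num n)%Z.
  change (cheb_num (S (S n))) with (- cheb_num (S n) - 4 * cheb_num n)%Z; lia.
Qed.

Lemma cos_mul_theta0_ne_1 n : (0 < n)%nat -> cos (INR n * theta0) <> 1.
Proof.
  intros Hn E; destruct n as [|n]; [lia|].
  destruct (cos_mul_theta0 (S n)) as [H _]; rewrite E in H.
  assert (Hpow : IZR (cheb_num (S n)) = 2 ^ S (S n)).
  { assert (0 < 2 ^ S (S n)) by (apply pow_lt; lra).
    apply (Rmult_eq_compat_r (2 ^ S (S n))) in H; rewrite Rmult_1_l in H; rewrite H; field; lra. }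
  rewrite pow_IZR in Hpow; apply eq_IZR in Hpow.
  destruct (cheb_num_odd n) as [k Hk]; rewrite Hk, Nat2Z.inj_succ, Z.pow_succ_r in Hpow by lia.
  lia.
Qed.

Lemma cos_mul_2theta0_ne_1 m : (0 < m)%nat -> cos (INR m * (2 * theta0)) <> 1.
Proof.
  intros Hm; replace (INR m * (2 * theta0)) with (INR (2 * m) * theta0)
    by (rewrite mult_INR; simpl; ring).
  apply cos_mul_theta0_ne_1; lia.
Qed.

(** * From circles to the whole sphere *)

(* Write [x = y + z] with [y] in the plane of [b1, b2] and [z] orthogonal to it, and let
   [x' = y' + z] where [y'] is the multiple of [b2] with [|y'| = |y|]. The reflection
   exchanging [y] and [y'] has its mirror in the plane and maps [x'] to [x]. *)
Lemma plane_reduction b1 b2 x : dot b1 b2 = 0 -> 0 < dot b1 b1 -> 0 < dot b2 b2 ->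
  circle_in_cl b1 b2 -> sphere x ->
  exists x', sphere x' /\ dot x' b1 = 0 /\
    (forall n, dot n b1 = 0 -> dot n b2 = 0 -> dot x' n = dot x n) /\
    (Sigma_cl x' -> Sigma_cl x).
Proof.
  intros H12 H1 H2 Hcirc Hx.
  set (p1 := dot x b1 / dot b1 b1); set (p2 := dot x b2 / dot b2 b2).
  set (y := vadd (vscal p1 b1) (vscal p2 b2)); set (z := vsub x y).
  assert (Hzb1 : dot z b1 = 0)
    by (unfold z, y, p1; dot_expand; rewrite (dot_sym b2 b1), H12; field; lra).
  assert (Hzb2 : dot z b2 = 0)
    by (unfold z, y, p2; dot_expand; rewrite H12; field; lra).
  set (lam := sqrt (dot y y / dot b2 b2)).
  assert (Hlam : lam * lam = dot y y / dot b2 b2)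
    by (apply sqrt_sqrt, Rmult_le_pos; [apply dot_ge0 | left; apply Rinv_0_lt_compat, H2]).
  set (y' := vscal lam b2).
  assert (Hy' : dot y' y' = dot y y)
    by (unfold y'; dot_expand; rewrite <- Rmult_assoc, Hlam; field; lra).
  assert (Hzy : dot z y = 0) by (unfold y; dot_expand; rewrite Hzb1, Hzb2; ring).
  assert (Hzy' : dot z y' = 0) by (unfold y'; rewrite dot_scalr, Hzb2; ring).
  exists (vadd y' z); split; [|split; [|split]].
  - replace x with (vadd y z) in Hx by (unfold z; vext; ring).
    revert Hx; unfold sphere; dot_expand; rewrite !(dot_sym y' z), (dot_sym y z), Hzy, Hzy', Hy'; lra.
  - unfold y'; dot_expand; rewrite Hzb1, (dot_sym b2 b1), H12; ring.
  - intros n Hn1 Hn2; unfold y', z, y; dot_expand.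
    rewrite !(dot_sym b1 n), !(dot_sym b2 n), Hn1, Hn2; ring.
  - intros Kx'; destruct (classic (y' = y)) as [E|N].
    + replace x with (vadd y' z) by (rewrite E; unfold z; vext; ring); exact Kx'.
    + replace x with (refl (normalize (vsub y' y)) (vadd y' z)).
      * assert (Hh : sphere (normalize (vsub y' y))) by now apply sphere_normalize.
        apply Sigma_cl_refl; [|exact Kx'].
        unfold normalize in *; set (r := vnorm (vsub y' y)) in *.
        replace (vscal (/ r) (vsub y' y)) with (vadd (vscal (- p1 / r) b1) (vscal ((lam - p2) / r) b2))
          in * by (unfold y, y'; vext; unfold Rdiv; ring).
        apply Hcirc, Hh.
      * rewrite refl_add, householder_swap, householder_fix
          by (auto || (rewrite Hzy, Hzy'; reflexivity)).
        unfold z; vext; ring.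
Qed.

Definition a3 : V4 := mkV 0 (1/2) (tau'/2) (tau/2).
Definition b3 : V4 := mkV 0 (1/2) (tau/2) (tau'/2).
Definition w3 : V4 := vadd b3 (vscal (1/4) a3).

Lemma tau_pow_SS n : tau ^ S (S n) = tau ^ S n + tau ^ n.
Proof. simpl; rewrite <- Rmult_assoc, tau_sq; ring. Qed.

Ltac tau_solve := rewrite ?tau'E; vext; field_simplify_eq; repeat rewrite tau_pow_SS; ring.

Lemma a3_root : is_root a3.
Proof.
  left; right; right; exists (0,1,2,3)%nat, true, true, true; split; [simpl; auto|].
  unfold a3, permv, sgn; vext; field.
Qed.

Lemma b3_root : is_root b3.
Proof.
  right; right; right; exists (0,1,2,3)%nat, true, true, true; split; [simpl; auto|].
  unfold b3, permv, sgn; vext; field.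
Qed.

Lemma a3_unit : dot a3 a3 = 1.
Proof. apply root_unit, a3_root. Qed.

Lemma a3_b3 : dot a3 b3 = -1/4.
Proof. unfold dot, a3, b3; simpl; rewrite tau'E; pose proof tau_sq; nra. Qed.

Lemma w3_a3 : dot w3 a3 = 0.
Proof. unfold w3; dot_expand; rewrite (dot_sym b3 a3), a3_b3, a3_unit; lra. Qed.

Lemma w3_unit : dot w3 w3 = 15/16.
Proof.
  unfold w3; dot_expand; rewrite (dot_sym b3 a3), a3_b3, a3_unit, (root_unit b3 b3_root); lra.
Qed.

Lemma circle_a3_w3 : circle_in_cl a3 w3.
Proof.
  pose proof sin_theta0_pos.
  apply (circle_in_cl_basis a3 (perp a3 b3 theta0) _ _ 1 0 0 (sin theta0)).
  - vext; ring.
  - unfold w3, perp; rewrite cos_theta0; vext; field; lra.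
  - apply circle_in_cl_rot; auto using a3_unit, a3_root, b3_root, cos_mul_2theta0_ne_1.
    + apply root_unit, b3_root.
    + rewrite cos_theta0; apply a3_b3.
    + lra.
Qed.

Definition h1 : V4 := mkV (1/2) (1/2) (1/2) (1/2).
Definition h2 : V4 := mkV (1/2) 0 (-tau/2) (-tau'/2).
Definition ka : V4 := mkV 0 (-tau'/2) (1/2) (tau/2).
Definition kb : V4 := mkV 0 (1/2) (tau'/2) (-tau/2).

Lemma h1_root : is_root h1.
Proof. left; right; left; exists true, true, true, true; unfold h1, sgn; vext; field. Qed.

Lemma h2_root : is_root h2.
Proof.
  left; right; right; exists (1,0,3,2)%nat, true, false, false; split; [simpl; tauto|].
  unfold h2, permv, sgn; vext; field.
Qed.

Lemma ka_root : is_root ka.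
Proof.
  right; right; right; exists (0,3,1,2)%nat, true, true, false; split; [simpl; tauto|].
  unfold ka, permv, sgn; vext; field.
Qed.

Lemma kb_root : is_root kb.
Proof.
  left; right; right; exists (0,1,2,3)%nat, true, true, false; split; [simpl; tauto|].
  unfold kb, permv, sgn; vext; field.
Qed.

Definition rot_h (x : V4) : V4 := refl h1 (refl h2 x).
Definition rot_k (x : V4) : V4 := refl ka (refl kb x).

Lemma Hinf_rot_h : Hinf rot_h.
Proof. apply (Hinf_comp (refl h1) (refl h2)); apply Hinf_refl; auto using h1_root, h2_root. Qed.

Lemma Hinf_rot_k : Hinf rot_k.
Proof. apply (Hinf_comp (refl ka) (refl kb)); apply Hinf_refl; auto using ka_root, kb_root. Qed.

Definition gp : V4 := mkV 0 1 (-1) (-1).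
Definition s1 : V4 := rot_h w3.
Definition s2 : V4 := rot_k (vadd (vscal (3/8 * (2 * tau - 1)) a3) (vscal (-3/2) w3)).

Lemma rot_h_a3 : rot_h (vscal (-1) a3) = e 0.
Proof. unfold rot_h, h1, h2, a3; tau_solve. Qed.

(* [2 tau - 1 = sqrt 5]; the preimage lies on the circle of [a3] and [w3] and has norm [sqrt 3]. *)
Lemma rot_k_gp : rot_k (vadd (vscal (3/2) a3) (vscal (2/5 * (2 * tau - 1)) w3)) = gp.
Proof. unfold rot_k, ka, kb, w3, a3, b3, gp; tau_solve. Qed.

Lemma rot_k_e0 : rot_k (e 0) = e 0.
Proof. unfold rot_k, ka, kb; vext; ring. Qed.

Lemma circle_e0_s1 : circle_in_cl (e 0) s1.
Proof.
  rewrite <- rot_h_a3; apply circle_in_cl_Hinf; [exact Hinf_rot_h|].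
  apply (circle_in_cl_basis a3 w3 _ _ (-1) 0 0 1); [vext; ring | vext; ring | exact circle_a3_w3].
Qed.

Lemma circle_gp_s2 : circle_in_cl gp s2.
Proof.
  rewrite <- rot_k_gp; apply circle_in_cl_Hinf; [exact Hinf_rot_k|].
  eapply circle_in_cl_basis; [reflexivity | reflexivity | exact circle_a3_w3].
Qed.

Lemma orth_e0_gp_decomp x : dot x (e 0) = 0 -> dot x gp = 0 ->
  x = vadd (vscal (dot x a3) a3) (vscal (16/15 * dot x w3) w3).
Proof.
  destruct x as [x0 x1 x2 x3]; unfold dot, e, gp; simpl; intros H0 H1.
  assert (x0 = 0) by lra; assert (x1 = x2 + x3) by lra; subst x0 x1.
  unfold w3, b3, a3; tau_solve.
Qed.

Lemma sphere_Sigma_cl x : sphere x -> Sigma_cl x.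
Proof.
  intros Hx; pose proof (Hinf_O4 _ Hinf_rot_h) as Oh; pose proof (Hinf_O4 _ Hinf_rot_k) as Ok.
  assert (Hs1 : dot (e 0) s1 = 0)
    by (rewrite <- rot_h_a3; unfold s1; rewrite Oh, dot_scall, dot_sym, w3_a3; ring).
  destruct (plane_reduction (e 0) s1 x Hs1) as [x1 [Hx1 [H10 [_ K1]]]];
    [unfold e, dot; simpl; lra | unfold s1; rewrite Oh, w3_unit; lra | exact circle_e0_s1 | exact Hx |].
  assert (Hs2 : dot gp s2 = 0)
    by (rewrite <- rot_k_gp; unfold s2; rewrite Ok; dot_expand;
        rewrite a3_unit, w3_unit, w3_a3, (dot_sym a3 w3), w3_a3; lra).
  assert (Hs2' : 0 < dot s2 s2)
    by (unfold s2; rewrite Ok; dot_expand; rewrite a3_unit, w3_unit, w3_a3, (dot_sym a3 w3), w3_a3;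
        pose proof sqrt5_sq; unfold tau; nra).
  destruct (plane_reduction gp s2 x1 Hs2) as [x2 [Hx2 [H2g [H2n K2]]]];
    [unfold gp, dot; simpl; lra | exact Hs2' | exact circle_gp_s2 | exact Hx1 |].
  assert (H20 : dot x2 (e 0) = 0).
  { rewrite H2n; [exact H10 | unfold gp, e, dot; simpl; ring |].
    rewrite <- rot_k_e0; unfold s2; rewrite Ok; unfold w3, b3, a3, e, dot; simpl; ring. }
  apply K1, K2; rewrite (orth_e0_gp_decomp x2 H20 H2g).
  apply circle_a3_w3; rewrite <- orth_e0_gp_decomp by assumption; exact Hx2.
Qed.

(** * Products of reflections *)

Fixpoint refl_prod (L : list V4) (x : V4) : V4 :=
  match L with [] => x | v :: L' => refl v (refl_prod L' x) end.

Lemma O4_refl_prod L : Forall sphere L -> O4 (refl_prod L).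
Proof.
  induction 1 as [|v L Hv _ IH]; [apply O4_id|].
  apply (O4_comp (refl v) (refl_prod L)); [apply O4_refl, Hv | exact IH].
Qed.

Lemma refl_prod_app A B x : refl_prod (A ++ B) x = refl_prod A (refl_prod B x).
Proof. induction A as [|v A IH]; simpl; congruence. Qed.

Lemma refl_prod_rev L x : Forall sphere L -> refl_prod (rev L) (refl_prod L x) = x.
Proof.
  intros HL; revert x; induction HL as [|v L Hv _ IH]; intros x; [reflexivity|].
  simpl; rewrite refl_prod_app; simpl; rewrite refl_invol by exact Hv; apply IH.
Qed.

Lemma det4_refl_prod L : Forall sphere L -> det4 (refl_prod L) = (-1) ^ length L.
Proof.
  induction 1 as [|v L Hv HL IH]; [apply det4_id|].
  change (det4 (fun x => refl v (refl_prod L x)) = (-1) ^ S (length L)).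
  rewrite det4_comp, det4_refl, IH, Hv by auto using O4_refl, O4_refl_prod; simpl; ring.
Qed.

Lemma sphere_e j : (j < 4)%nat -> sphere (e j).
Proof. intros Hj; destruct j as [|[|[|[|j]]]]; try lia; unfold sphere, e, dot; simpl; ring. Qed.

(* Householder reduction: each reflection fixes one more basis vector. *)
Lemma O4_refl_prod_fix k f : (k <= 4)%nat -> O4 f ->
  exists L, Forall sphere L /\ forall j, (j < k)%nat -> refl_prod L (f (e j)) = e j.
Proof.
  intros Hk Hf; induction k as [|k IH]; [exists []; split; [constructor | intros; lia]|].
  destruct IH as [L [HL HLj]]; [lia|].
  set (g x := refl_prod L (f x)).
  assert (Og : O4 g) by (apply (O4_comp (refl_prod L) f); auto using O4_refl_prod).
  destruct (classic (g (e k) = e k)) as [Eq|Nq].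
  - exists L; split; [exact HL|]; intros j Hj.
    destruct (Nat.eq_dec j k) as [->|Nj]; [exact Eq | apply HLj; lia].
  - exists (normalize (vsub (g (e k)) (e k)) :: L); split; [constructor; auto using sphere_normalize|].
    intros j Hj; simpl; fold (g (e j)).
    destruct (Nat.eq_dec j k) as [->|Nj].
    + apply householder_swap; [apply Og | exact Nq].
    + assert (Gj : g (e j) = e j) by (apply HLj; lia).
      rewrite Gj; apply householder_fix; rewrite <- Gj at 1; apply Og.
Qed.

Lemma O4_factor f : O4 f ->
  exists M, Forall sphere M /\ forall j, (j < 4)%nat -> f (e j) = refl_prod M (e j).
Proof.
  intros Hf; destruct (O4_refl_prod_fix 4 f (le_n 4) Hf) as [L [HL Hj]].
  exists (rev L); split; [now apply Forall_rev|].
  intros j Hj4; rewrite <- (Hj j Hj4) at 2; symmetry; apply refl_prod_rev, HL.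
Qed.

(* Since [r_z r_x r_z = r_(r_z x)], it suffices that [r_z x = -y]; if [x = -y], [z = x] works. *)
Lemma refl_pair_commutator x y : sphere x -> sphere y ->
  exists z, sphere z /\ forall v, refl x (refl z (refl x (refl z v))) = refl x (refl y v).
Proof.
  intros Hx Hy; destruct (classic (x = vscal (-1) y)) as [E|N].
  - exists x; split; [exact Hx|]; intros v.
    rewrite !refl_invol by exact Hx; rewrite E, refl_opp, refl_invol by exact Hy; reflexivity.
  - set (z := normalize (vsub x (vscal (-1) y))).
    assert (Hz : sphere z) by now apply sphere_normalize.
    exists z; split; [exact Hz|]; intros v; f_equal.
    rewrite <- (refl_conj (refl z) (refl z)) 
      by first [apply O4_refl, Hz | intros; apply refl_invol, Hz].
    unfold z; rewrite householder_swap, refl_opp; [reflexivity | | exact N].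
    rewrite dot_scall, dot_scalr, Hx, Hy; ring.
Qed.

Definition unif_close (eps : R) (g f : V4 -> V4) : Prop :=
  forall x, sphere x -> vnorm (vsub (g x) (f x)) < eps.

Lemma unif_close_id eps : 0 < eps -> unif_close eps (fun x => x) (fun x => x).
Proof. intros He x _; rewrite vnorm_sub_diag; exact He. Qed.

Lemma unif_close_le e e' g f : e <= e' -> unif_close e g f -> unif_close e' g f.
Proof. intros He H x Hx; specialize (H x Hx); lra. Qed.

Lemma unif_close_ext eps g f f' : (forall x, f x = f' x) -> unif_close eps g f -> unif_close eps g f'.
Proof. intros E H x Hx; rewrite <- E; apply H, Hx. Qed.

Lemma unif_close_refl e1 e2 s v g f : O4 f -> sphere s -> sphere v ->
  vnorm (vsub s v) < e2 -> unif_close e1 g f ->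
  unif_close (e1 + 4 * e2) (fun x => refl s (g x)) (fun x => refl v (f x)).
Proof.
  intros Hf Hs Hv Hsv Hgf x Hx; specialize (Hgf x Hx).
  pose proof (refl_approx s v (g x) (f x) Hs Hv (sphere_O4 f x Hf Hx)); lra.
Qed.

Lemma Sigma_approx v d : sphere v -> 0 < d -> exists s, Sigma s /\ vnorm (vsub s v) < d.
Proof. intros Hv Hd; apply (sphere_Sigma_cl v Hv), Hd. Qed.

Lemma Hinf_approx_refl_prod M eps : Forall sphere M -> 0 < eps ->
  exists g, Hinf g /\ unif_close eps g (refl_prod M).
Proof.
  intros HM; revert eps; induction HM as [|v M Hv HM IH]; intros eps He.
  - exists (fun x => x); split; [apply gg_id | now apply unif_close_id].
  - destruct (IH (eps / 2)) as [g [Hg Ag]]; [lra|].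
    destruct (Sigma_approx v (eps / 8) Hv) as [s [Hs Ds]]; [lra|].
    exists (fun x => refl s (g x)); split.
    + apply (Hinf_comp (refl s) g); [now apply Hinf_refl_Sigma | exact Hg].
    + apply (unif_close_le (eps / 2 + 4 * (eps / 8))); [lra|].
      apply unif_close_refl; auto using O4_refl_prod, Sigma_sphere.
Qed.

Lemma commutator_Hinf_plus s t : Sigma s -> Sigma t ->
  Hinf_plus (fun v => refl s (refl t (refl s (refl t v)))).
Proof.
  intros Hs Ht; apply Sigma_sphere in Hs as Us; apply Sigma_sphere in Ht as Ut.
  apply gg_base; exists (refl s), (refl t), (refl s), (refl t).
  repeat split; auto using Hinf_refl_Sigma; intros; apply refl_invol; assumption.
Qed.

Lemma Hinf_plus_approx_refl_prod n M eps : length M = (2 * n)%nat -> Forall sphere M -> 0 < eps ->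
  exists g, Hinf_plus g /\ unif_close eps g (refl_prod M).
Proof.
  revert M eps; induction n as [|n IH]; intros M eps HlM HM He.
  - destruct M; [|simpl in HlM; lia].
    exists (fun x => x); split; [apply gg_id | now apply unif_close_id].
  - destruct M as [|x [|y M]]; simpl in HlM; try lia.
    inversion HM as [|? ? Hx HM1]; inversion HM1 as [|? ? Hy HM']; subst.
    destruct (IH M (eps / 2)) as [g [Hg Ag]]; [lia | exact HM' | lra |].
    destruct (refl_pair_commutator x y Hx Hy) as [z [Hz Ez]].
    destruct (Sigma_approx x (eps / 32) Hx) as [s [Hs Ds]]; [lra|].
    destruct (Sigma_approx z (eps / 32) Hz) as [t [Ht Dt]]; [lra|].
    exists (fun v => refl s (refl t (refl s (refl t (g v))))); split.
    + apply (gg_comp _ (fun v => refl s (refl t (refl s (refl t v)))) g); [|exact Hg].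
      now apply commutator_Hinf_plus.
    + apply (unif_close_ext _ _ (fun v => refl x (refl z (refl x (refl z (refl_prod M v))))));
        [intros; apply Ez|].
      apply (unif_close_le (eps / 2 + 4 * (eps / 32) + 4 * (eps / 32) + 4 * (eps / 32) + 4 * (eps / 32)));
        [lra|].
      pose proof (Sigma_sphere s Hs); pose proof (Sigma_sphere t Ht).
      assert (Ox : O4 (refl x)) by now apply O4_refl.
      assert (Oz : O4 (refl z)) by now apply O4_refl.
      assert (O0 : O4 (refl_prod M)) by now apply O4_refl_prod.
      repeat apply unif_close_refl; auto using O4_comp.
Qed.

Lemma dense_Hinf_O4 : dense_maps Hinf O4.
Proof.
  intros f Hf eps He; destruct (O4_factor f Hf) as [M [HM Hj]].
  destruct (Hinf_approx_refl_prod M eps HM He) as [g [Hg A]].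
  exists g; split; [exact Hg|]; intros j Hj4; rewrite Hj by exact Hj4; apply A, sphere_e, Hj4.
Qed.

Lemma dense_Hinf_plus_SO4 : dense_maps Hinf_plus SO4.
Proof.
  intros f [Hf Df] eps He; destruct (O4_factor f Hf) as [M [HM Hj]].
  assert (Dm : det4 f = (-1) ^ length M)
    by (rewrite (det4_basis f (refl_prod M) Hj); apply det4_refl_prod, HM).
  destruct (Nat.Even_or_Odd (length M)) as [[n Hn]|[n Hn]].
  - destruct (Hinf_plus_approx_refl_prod n M eps Hn HM He) as [g [Hg A]].
    exists g; split; [exact Hg|]; intros j Hj4; rewrite Hj by exact Hj4; apply A, sphere_e, Hj4.
  - rewrite Hn, pow_add, pow_1, pow_mult in Dm; replace ((-1) ^ 2) with 1 in Dm by ring.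
    rewrite pow1 in Dm; lra.
Qed.

Lemma dense_Sigma : dense_in_sphere Sigma.
Proof. split; [exact Sigma_sphere | intros x Hx eps He; apply Sigma_approx; assumption]. Qed.

Theorem mainTheorem4 :
  (forall g, Hinf_plus g -> SO4 g) /\ dense_maps Hinf_plus SO4 /\
  (forall g, Hinf g -> O4 g) /\ dense_maps Hinf O4 /\
  dense_in_sphere Sigma.
Proof.
  exact (conj Hinf_plus_SO4 (conj dense_Hinf_plus_SO4 (conj Hinf_O4 (conj dense_Hinf_O4 dense_Sigma)))).
Qed.
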